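(* Let $G_\sigma$ be an ordered graph on $\{1,\dots,p\}$. The following are equivalent: (a) $G_\sigma$ satisfies Property-B; (b) for every $1\le k\le j\le i\le p$, $L_{ik}L_{jk}D_k$ can be expressed as a polynomial in the entries of $L_I$ and $\widetilde D$ (with negative powers allowed for entries of $\widetilde D$), and in every term of the expansion of $L_{ik}L_{jk}D_k$ the power of every entry of $\widetilde D$ is $0$, $1$ or $-1$.
   Context: $G_\sigma$ has edge set $E_\sigma$. For $\Omega$ symmetric positive definite with $\Omega_{ij}=0$ for $i\ne j$, $(i,j)\notin E_\sigma$, write $\Omega=LDL^T$ (modified Cholesky: $L$ unit lower triangular, $D=\mathrm{diag}(D_1,\dots,D_p)$), $\widetilde D_1=D_1$, $\widetilde D_k=D_k/D_{k-1}$, so $D_k=\prod_{l\le k}\widetilde D_l$. $L_I=\{L_{ij}:i>j,(i,j)\in E_\sigma\}$ are independent parameters; for $i>j$, $(i,j)\notin E_\sigma$, the relation $L_{ij}=-\sum_{k<j}L_{ik}L_{jk}\prod_{l=k+1}^j\widetilde D_l^{-1}$ applied recursively expresses $L_{ij}$ as a polynomial (its expansion, like terms collected) in $L_I$ and $\widetilde D_1^{-1},\dots,\widetilde D_p^{-1}$; $L_{kk}=1$. $G_\sigma$ has Property-B if for every $i>j$ with $(i,j)\notin E_\sigma$, every $\widetilde D_k$ appears in every term of the expansion of $L_{ij}$ with exponent $0$ or $-1$. *)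

From mathcomp Require Import all_boot all_order all_algebra.
Set Implicit Arguments. Unset Strict Implicit. Unset Printing Implicit Defensive.
Import Order.TTheory GRing.Theory Num.Theory.
Local Open Scope ring_scope.

(* Vertices 1..p of the ordered graph are represented by 'I_p (0-based),
   ordered by the natural order; E is the edge relation. *)

Section Laurent.
Variable p : nat.

(* A Laurent monomial in the variables L_{ab} (nonnegative exponents) and
   Dt_l (= \widetilde D_l, integer exponents). *)
Definition mono := ({ffun 'I_p * 'I_p -> nat} * {ffun 'I_p -> int})%type.

Definition mono1 : mono := ([ffun _ => 0%N], [ffun _ => 0]).
Definition monoM (a b : mono) : mono :=
  ([ffun ab => (a.1 ab + b.1 ab)%N], [ffun l => a.2 l + b.2 l]).

(* A formal (unexpanded) sum of integer-weighted monomials. *)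
Definition lpoly := seq (int * mono).

Definition lconst (c : int) : lpoly := [:: (c, mono1)].
Definition ladd (P Q : lpoly) : lpoly := P ++ Q.
Definition lopp (P : lpoly) : lpoly := [seq (- t.1, t.2) | t <- P].
Definition lmul (P Q : lpoly) : lpoly :=
  [seq (a.1 * b.1, monoM a.2 b.2) | a <- P, b <- Q].

Definition lX (i j : 'I_p) : lpoly :=
  [:: (1, ([ffun ab => nat_of_bool (ab == (i, j))], [ffun _ => 0]))].
Definition lD (l : 'I_p) (e : int) : lpoly :=
  [:: (1, ([ffun _ => 0%N], [ffun l' => if l' == l then e else 0]))].

Definition lcoef (P : lpoly) (m : mono) : int :=
  \sum_(t <- P | t.2 == m) t.1.

Definition is_term (P : lpoly) (m : mono) : bool := lcoef P m != 0.

Variable E : rel 'I_p.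

(* L_{ij} with fuel: L_ii = 1, L_ij = 0 for i < j, L_ij = variable for edges
   i > j, and for non-edges i > j the recursive relation
   L_ij = - sum_{k<j} L_ik L_jk prod_{l=k+1}^{j} Dt_l^{-1}. *)
Fixpoint Lfuel (n : nat) (i j : 'I_p) : lpoly :=
  match n with
  | 0%N => [::]
  | n'.+1 =>
    if i == j then lconst 1
    else if (j < i)%N then
      (if E i j then lX i j
       else lopp (\big[ladd/[::]]_(k : 'I_p | (k < j)%N)
              lmul (lmul (Lfuel n' i k) (Lfuel n' j k))
                   (\big[lmul/lconst 1]_(l : 'I_p | (k < l <= j)%N) lD l (-1))))
    else [::]
  end.

(* Sufficient fuel: j.+1 *)
Definition Lent (i j : 'I_p) : lpoly := Lfuel (nat_of_ord j).+1 i j.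

Definition Dent (k : 'I_p) : lpoly :=
  \big[lmul/lconst 1]_(l : 'I_p | (l <= k)%N) lD l 1.

Definition PropertyB : Prop :=
  forall i j : 'I_p, (j < i)%N -> ~~ E i j ->
  forall m : mono, is_term (Lent i j) m ->
  forall l : 'I_p, (m.2 l == 0) || (m.2 l == -1).

Definition PropertyLLD : Prop :=
  forall i j k : 'I_p, (k <= j)%N -> (j <= i)%N ->
  forall m : mono, is_term (lmul (lmul (Lent i k) (Lent j k)) (Dent k)) m ->
  forall l : 'I_p, [|| m.2 l == 0, m.2 l == 1 | m.2 l == -1].

End Laurent.

From mathcomp Require Import all_boot all_order all_algebra.
From mathcomp Require Import zify.
Set Implicit Arguments. Unset Strict Implicit. Unset Printing Implicit Defensive.
Import Order.TTheory GRing.Theory Num.Theory.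
Local Open Scope ring_scope.

(* If Property-B holds, a term of L_ik L_jk D_k is the product of a term of L_ik, a term
   of L_jk and Dt_1 ... Dt_k.  For l <= k each of the first two factors carries Dt_l with
   exponent 0 or -1 (L_kk = 1, edge entries are variables, and Property-B for the other
   entries), while no L_ik involves Dt_l for l > k; so the total exponent lies in
   {-1, 0, 1}.
   Conversely, suppose a term of L_ij carries Dt_l with exponent e outside {0, -1}.  Order
   monomials lexicographically, first by the exponent of Dt_l (increasing or decreasing,
   according to the sign of e), then by the whole exponent vector.  This total order is
   compatible with multiplication, so the square of the maximal term a of L_ij cannot
   cancel in L_ij^2, and a^2 D_j is a term of L_ij L_ij D_j whose Dt_l-exponent, 2e or
   2e + 1, lies outside {-1, 0, 1}. *)

Lemma exists_argmax_seq (T : eqType) disp (K : orderType disp) (f : T -> K) x s :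
  exists2 y, y \in x :: s & forall z, z \in x :: s -> (f z <= f y)%O.
Proof.
elim: s x => [|y s IH] x.
  by exists x; rewrite ?mem_head // => z; rewrite inE => /eqP ->.
have [z zs zmax] := IH y.
have [xz | zx] := leP (f x) (f z).
  exists z; first by rewrite in_cons zs orbT.
  by move=> t; rewrite in_cons => /orP [/eqP -> // | /zmax].
exists x; first exact: mem_head.
move=> t; rewrite in_cons => /orP [/eqP -> // | /zmax tz].
exact: le_trans tz (ltW zx).
Qed.

Section LaurentPolynomials.
Variable p : nat.
Implicit Types (P Q : lpoly p) (m u v w a d : mono p).

Lemma monoM1E u v ab : (monoM u v).1 ab = (u.1 ab + v.1 ab)%N.
Proof. by rewrite ffunE. Qed.

Lemma monoM2E u v l : (monoM u v).2 l = u.2 l + v.2 l.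
Proof. by rewrite ffunE. Qed.

Lemma monoMC : commutative (@monoM p).
Proof.
move=> u v; congr (_, _); apply/ffunP => x; rewrite !ffunE; first exact: addnC.
exact: addrC.
Qed.

Lemma monoIM : left_injective (@monoM p).
Proof.
move=> w [u1 u2] [v1 v2] [/ffunP eq1 /ffunP eq2]; congr (_, _); apply/ffunP => x.
  by move: (eq1 x); rewrite !ffunE => /addIn.
by move: (eq2 x); rewrite !ffunE => /addIr.
Qed.

Lemma lcoef_cons t P m :
  lcoef (t :: P) m = (if t.2 == m then t.1 else 0) + lcoef P m.
Proof. by rewrite /lcoef big_cons; case: ifP; rewrite ?add0r. Qed.

Lemma is_term_mem P m : is_term P m -> m \in map snd P.
Proof.
rewrite /is_term; elim: P => [|t P IH]; first by rewrite /lcoef big_nil eqxx.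
rewrite lcoef_cons /= in_cons; case: (t.2 =P m) => [->|_]; first by rewrite eqxx.
by rewrite add0r => /IH ->; rewrite orbT.
Qed.

Lemma big_lcoef P (F : mono p -> int) :
  \sum_(t <- P) t.1 * F t.2 = \sum_(u <- undup (map snd P)) lcoef P u * F u.
Proof.
under [RHS]eq_bigr => u _ do rewrite /lcoef big_distrl /=.
rewrite (exchange_big_dep predT) //=; apply: eq_big_seq => t tP.
under eq_bigl => u do rewrite eq_sym.
by rewrite -big_filter filter_pred1_uniq ?undup_uniq ?mem_undup ?map_f ?big_seq1.
Qed.

Definition lshift d P : lpoly p := [seq (t.1, monoM d t.2) | t <- P].

Lemma lmul_monomial P d : lmul P [:: (1, d)] = lshift d P.
Proof.
by elim: P => //= t P IH; rewrite /lmul /= in IH *; rewrite mulr1 IH (monoMC t.2).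
Qed.

Lemma lcoef_shift d P v : lcoef (lshift d P) (monoM d v) = lcoef P v.
Proof.
rewrite /lcoef big_map; apply: eq_bigl => t /=.
by apply/eqP/eqP => [|-> //]; rewrite !(monoMC d); apply: monoIM.
Qed.

Lemma is_term_shift d P m :
  is_term (lshift d P) m -> exists2 v, is_term P v & m = monoM d v.
Proof.
move=> Hm; have /mapP [_ /mapP [t _ ->] /= m_eq] := is_term_mem Hm.
by exists t.2; rewrite // /is_term -(lcoef_shift d) -m_eq.
Qed.

Lemma lcoef_mul P Q m :
  lcoef (lmul P Q) m = \sum_(u <- undup (map snd P)) lcoef P u * lcoef (lshift u Q) m.
Proof.
rewrite /lcoef big_mkcond /lmul big_allpairs_dep /= -big_lcoef.
by apply: eq_bigr => t _; rewrite big_map big_distrr [RHS]big_mkcond.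
Qed.

Lemma is_term_mul P Q m : is_term (lmul P Q) m ->
  exists u v, [/\ is_term P u, is_term Q v & m = monoM u v].
Proof.
rewrite /is_term lcoef_mul => nz.
have /hasP [u _] : has (fun u => lcoef P u * lcoef (lshift u Q) m != 0) (undup (map snd P)).
  apply: contraNT nz => /hasPn zero; rewrite big1_seq // => u /andP [_ /zero].
  by move/negPn/eqP.
by rewrite mulf_eq0 negb_or => /andP [Pu /is_term_shift [v Qv ->]]; exists u, v.
Qed.

Lemma map_snd_lopp P : map snd (lopp P) = map snd P.
Proof. by rewrite /lopp -map_comp. Qed.

Lemma mem_map_snd_lmul P Q m : m \in map snd (lmul P Q) ->
  exists u v, [/\ u \in map snd P, v \in map snd Q & m = monoM u v].
Proof.
case/mapP => t /allpairsP [[a b] /= [aP bQ ->]] ->.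
by exists a.2, b.2; rewrite !map_f.
Qed.

Lemma mem_map_snd_big_ladd (I : Type) (r : seq I) (A : pred I) (F : I -> lpoly p) m :
  m \in map snd (\big[@ladd p/[::]]_(k <- r | A k) F k) ->
  exists2 k, A k & m \in map snd (F k).
Proof.
apply: (big_ind (fun P => m \in map snd P -> exists2 k, A k & m \in map snd (F k))) => //.
  by move=> P Q HP HQ; rewrite /ladd map_cat mem_cat => /orP [/HP | /HQ].
by move=> k Ak; exists k.
Qed.

Section LeadingTerm.
Variables (disp : Order.disp_t) (K : orderType disp) (key : mono p -> K).
Hypothesis key_inj : injective key.
Hypothesis keyM : forall w, {mono (@monoM p)^~ w : u v / (key u < key v)%O}.

Lemma is_term_square_max P a : is_term P a ->
  (forall u, is_term P u -> (key u <= key a)%O) -> is_term (lmul P P) (monoM a a).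
Proof.
move=> Pa amax.
have lt_aa u v : is_term P u -> is_term P v -> u != a ->
    (key (monoM u v) < key (monoM a a))%O.
  move=> Pu Pv ua; apply: (@lt_le_trans _ _ (key (monoM a v))).
    by rewrite keyM lt_neqAle (inj_eq key_inj) ua amax.
  have := amax v Pv; rewrite le_eqVlt => /orP [/eqP /key_inj -> // | va].
  by rewrite !(monoMC a) ltW ?keyM.
rewrite /is_term lcoef_mul (bigD1_seq a) ?undup_uniq ?mem_undup ?is_term_mem //=.
rewrite lcoef_shift big1_seq ?addr0 ?mulf_neq0 // => u /andP [ua _].
have [-> | Pu] := eqVneq (lcoef P u) 0; first by rewrite mul0r.
have [-> | /is_term_shift [v Pv e]] := eqVneq (lcoef (lshift u P) (monoM a a)) 0.
  by rewrite mulr0.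
by have := lt_aa u v Pu Pv ua; rewrite -e ltxx.
Qed.

End LeadingTerm.

Lemma exists_max_term disp (K : orderType disp) (key : mono p -> K) P m :
  is_term P m -> exists2 a, is_term P a & forall u, is_term P u -> (key u <= key a)%O.
Proof.
have inS u : (u \in [seq v <- map snd P | is_term P v]) = is_term P u.
  by rewrite mem_filter andb_idr // => /is_term_mem.
move: inS; case: [seq v <- map snd P | is_term P v] => [|x s] inS Pm.
  by move: Pm; rewrite -inS.
have [a xa amax] := exists_argmax_seq key x s.
by exists a; rewrite -?inS // => u; rewrite -inS; apply: amax.
Qed.

Lemma ltxi_map_morph (I : Type) (f : I -> mono p -> int) (r : seq I) :
  (forall i, {morph f i : x y / monoM x y >-> x + y}) ->
  forall w, {mono (@monoM p)^~ w : u v /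
    ([seq f i u | i <- r] < [seq f i v | i <- r] :> seqlexi int)%O}.
Proof.
move=> fM w u v; elim: r => //= i r IH.
by rewrite ltxi_cons !fM !lerD2r IH.
Qed.

Definition lex_coord (s : int) (l : 'I_p) (i : option ('I_p + 'I_p * 'I_p)) u : int :=
  match i with
  | None => s * u.2 l
  | Some (inl l') => u.2 l'
  | Some (inr ab) => (u.1 ab)%:Z
  end.

Definition lex_key s l u : seqlexi int :=
  [seq lex_coord s l i u | i <- None :: map Some (enum {: 'I_p + 'I_p * 'I_p})].

Lemma lex_key_inj s l : injective (lex_key s l).
Proof.
move=> u v; rewrite /lex_key => /eq_in_map e.
have mem i : Some i \in None :: map Some (enum {: 'I_p + 'I_p * 'I_p}).
  by rewrite in_cons map_f ?mem_enum.
apply: injective_projections; apply/ffunP => x; first by have [] := e _ (mem (inr x)).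
exact: e _ (mem (inl x)).
Qed.

Lemma lex_keyM s l w : {mono (@monoM p)^~ w : u v / (lex_key s l u < lex_key s l v)%O}.
Proof.
move=> u v; rewrite /lex_key ltxi_map_morph //; case=> [[l'|ab]|] x y /=.
- by rewrite monoM2E.
- by rewrite monoM1E.
- by rewrite monoM2E mulrDr.
Qed.

Lemma big_lD (r : seq 'I_p) (A : pred 'I_p) e : uniq r ->
  \big[@lmul p/lconst p 1]_(l <- r | A l) lD l e =
  [:: (1, ([ffun _ => 0%N], [ffun l => if (l \in r) && A l then e else 0]))].
Proof.
elim: r => [|x r IH] /=; first by rewrite big_nil /lconst /mono1.
move=> /andP [xr ur]; rewrite big_cons IH //.
case: ifP => Ax.
  rewrite /lmul /= mulr1; congr [:: (_, (_, _))]; apply/ffunP => z; rewrite !ffunE //.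
  rewrite inE; case: (eqVneq z x) => [->|] /=; first by rewrite (negbTE xr) Ax addr0.
  by rewrite add0r.
congr [:: (_, (_, _))]; apply/ffunP => z; rewrite !ffunE inE.
by case: (eqVneq z x) => [->|] /=; rewrite ?(negbTE xr) ?Ax.
Qed.

Definition D_mono (k : 'I_p) : mono p :=
  ([ffun _ => 0%N], [ffun l : 'I_p => if (l <= k)%N then 1 else 0]).

Lemma Dent_monomial k : Dent k = [:: (1, D_mono k)].
Proof.
rewrite /Dent /D_mono big_lD ?index_enum_uniq //; congr [:: (_, (_, _))].
by apply/ffunP => l; rewrite !ffunE mem_index_enum.
Qed.

End LaurentPolynomials.

Section Entries.
Variables (p : nat) (E : rel 'I_p).
Implicit Types (i j k l : 'I_p) (m : mono p).

Lemma Lfuel_exp_gt n i j m l :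
  m \in map snd (Lfuel E n i j) -> (j < l)%N -> m.2 l = 0.
Proof.
elim: n i j m => [//|n IH] i j m /=.
case: eqP => _; first by rewrite inE => /eqP -> _; rewrite ffunE.
case: ifP => // ji; case: ifP => _; first by rewrite inE => /eqP -> _; rewrite ffunE.
rewrite map_snd_lopp => /mem_map_snd_big_ladd [k kj].
case/mem_map_snd_lmul => _ [d [/mem_map_snd_lmul [x [y [xL yL ->]]] dD ->]] jl.
move: dD; rewrite big_lD ?index_enum_uniq // inE => /eqP ->.
rewrite !monoM2E ffunE mem_index_enum (IH _ _ _ xL) ?(IH _ _ _ yL) /=; try lia.
by case: ifP => //; lia.
Qed.

Lemma Lent_exp_gt i j m l : is_term (Lent E i j) m -> (j < l)%N -> m.2 l = 0.
Proof. by move/is_term_mem; apply: Lfuel_exp_gt. Qed.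

Lemma Lent_diag k : Lent E k k = lconst p 1.
Proof. by rewrite /Lent /= eqxx. Qed.

Lemma Lent_edge i k : (k < i)%N -> E i k -> Lent E i k = lX i k.
Proof. by move=> ki Eik; rewrite /Lent /= -val_eqE /= gtn_eqF // ki Eik. Qed.

Lemma Lent_exp_PropertyB i k m l : PropertyB E -> (k <= i)%N ->
  is_term (Lent E i k) m -> (m.2 l == 0) || (m.2 l == -1).
Proof.
move=> HB; rewrite leq_eqVlt => /orP [/eqP /val_inj -> | ki].
  by rewrite Lent_diag => /is_term_mem; rewrite inE => /eqP ->; rewrite ffunE.
have [Eik | nEik] := boolP (E i k); last by move=> Pm; exact: HB ki nEik m Pm l.
by rewrite Lent_edge // => /is_term_mem; rewrite inE => /eqP ->; rewrite ffunE.
Qed.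

Lemma PropertyB_PropertyLLD : PropertyB E -> PropertyLLD E.
Proof.
move=> HB i j k kj ji m; rewrite Dent_monomial lmul_monomial.
case/is_term_shift => _ /is_term_mul [x [y [Px Py ->]]] -> l.
rewrite !monoM2E ffunE.
have [_ | kl] := leqP l k.
  have := Lent_exp_PropertyB l HB (leq_trans kj ji) Px.
  by have := Lent_exp_PropertyB l HB kj Py; lia.
by rewrite (Lent_exp_gt Px kl) (Lent_exp_gt Py kl).
Qed.

Lemma PropertyLLD_PropertyB : PropertyLLD E -> PropertyB E.
Proof.
move=> HL i j ji _ m Pm l; apply/negPn/negP => bad_m.
pose s : int := if m.2 l < 0 then -1 else 1.
have [a Pa amax] := exists_max_term (lex_key s l) Pm.
have bad_a : ~~ ((a.2 l == 0) || (a.2 l == -1)).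
  have /= := lexi_lehead (amax m Pm); rewrite /s.
  by case: ifP; rewrite ?mulN1r ?mul1r; move: bad_m; lia.
have PaaD : is_term (lmul (lmul (Lent E i j) (Lent E i j)) (Dent j))
                    (monoM (D_mono j) (monoM a a)).
  rewrite Dent_monomial lmul_monomial /is_term lcoef_shift.
  exact: is_term_square_max (@lex_key_inj _ s l) (@lex_keyM _ s l) _ _ Pa amax.
have := HL i i j (ltnW ji) (leqnn i) _ PaaD l.
by rewrite !monoM2E ffunE; case: ifP => _; move: bad_a; lia.
Qed.

End Entries.

Theorem lemma5 (p : nat) (E : rel 'I_p) (Esym : symmetric E) (Eirr : irreflexive E) :
  PropertyB E <-> PropertyLLD E.
Proof.
by split; [apply: PropertyB_PropertyLLD | apply: PropertyLLD_PropertyB].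
Qed.
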